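(* Let $G=(V,E)$ be a finite simple undirected graph, $G_0:=G$, and let $W_1,\dots,W_r$ be distinct subsets of $V$ such that for every $t\in\{1,\dots,r\}$, $W_t$ is a clique of $G_{t-1}$ with $|W_t|\ge2$ and $G_t:=G_{t-1}\mid W_t$. Let $F_0:=STAB(G)$, $F_t:=\{x\in STAB(G)\mid x_{W_j}=1,\ j=1,\dots,t\}$, and $\mathcal S_t:=\mathcal S(G)\cap F_t$. Let $c^\top x\le d$, with $c\in\mathbb R^V$ and $d\in\mathbb R$, be a valid inequality for $STAB(G_r)$. For $t\in\{0,\dots,r\}$ define \[ f_t(x)=c^\top x+\sum_{\ell=t+1}^r\lambda^S_\ell(x_{W_\ell}-1), \] where, recursively for $\ell=r,r-1,\dots,1$, \[ \lambda^S_\ell=\max\{f_\ell(x)-d\mid x\in\mathcal S_{\ell-1},\ x_{W_\ell}=0\}, \] with the convention $\max\emptyset=0$. Then $f_t(x)\le d$ is valid for $F_t$ for every $t\in\{0,\dots,r\}$.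
   Context: For a graph $G=(V,E)$, $\mathcal S(G)\subseteq\{0,1\}^V$ is the set of characteristic vectors of stable sets of $G$, and $STAB(G)=\mathrm{conv}\,\mathcal S(G)$. For $W\subseteq V$ and $x\in\mathbb R^V$, $x_W=\sum_{v\in W}x_v$. The clique projection of a clique $W$ ($|W|\ge2$) of a graph $H=(V,E_H)$ is $H\mid W=(V,E_H\cup\{uv\notin E_H\mid u\ne v,\ W\subseteq N_H(u)\cup N_H(v)\})$, where $N_H(u)$ is the neighborhood of $u$ in $H$. *)

From mathcomp Require Import all_boot all_order all_algebra.
Set Implicit Arguments. Unset Strict Implicit. Unset Printing Implicit Defensive.
Import Order.TTheory GRing.Theory Num.Theory.
Local Open Scope ring_scope.

Definition simple_graph (V : finType) (e : rel V) : Prop :=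
  symmetric e /\ irreflexive e.

Section Defs.
Variables (V : finType) (R : realFieldType).

Definition nbhd (e : rel V) (u : V) : {set V} := [set w | e u w].

Definition stableb (e : rel V) (S : {set V}) : bool :=
  [forall u in S, forall v in S, ~~ e u v].
Definition is_clique (e : rel V) (W : {set V}) : Prop :=
  forall u v, u \in W -> v \in W -> u != v -> e u v.

Definition clique_proj (e : rel V) (W : {set V}) : rel V :=
  fun u v => e u v || ((u != v) && (W \subset nbhd e u :|: nbhd e v)).

Fixpoint Gseq (e : rel V) (W : nat -> {set V}) (t : nat) : rel V :=
  match t with
  | 0 => e
  | t'.+1 => clique_proj (Gseq e W t') (W t'.+1)
  end.

Definition chi (S : {set V}) : V -> R := fun v => (v \in S)%:R.

Definition xsum (x : V -> R) (W : {set V}) : R := \sum_(v in W) x v.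

Definition dotp (c x : V -> R) : R := \sum_v c v * x v.

(* STAB(G) = conv S(G): convex combinations of characteristic vectors
   of stable sets (the set S(G) is finite). *)
Definition inSTAB (e : rel V) (x : V -> R) : Prop :=
  exists w : {set V} -> R,
    [/\ forall S, 0 <= w S,
        forall S, ~~ stableb e S -> w S = 0,
        \sum_S w S = 1 &
        forall v, x v = \sum_S w S * chi S v].

Definition inF (e : rel V) (W : nat -> {set V}) (t : nat) (x : V -> R) : Prop :=
  inSTAB e x /\ forall j, (1 <= j <= t)%N -> xsum x (W j) = 1.

Definition maxS (A : {set {set V}}) (g : {set V} -> R) : R :=
  match [pick S in A] with
  | None => 0
  | Some S0 => \big[Num.max/g S0]_(S in A) g S
  end.

Definition fval (c : V -> R) (lam : nat -> R) (W : nat -> {set V}) (r t : nat)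
    (x : V -> R) : R :=
  dotp c x + \sum_(t.+1 <= l < r.+1) lam l * (xsum x (W l) - 1).

(* the family of stable sets S of G whose characteristic vector lies in
   S_{l-1} = S(G) ∩ F_{l-1} and satisfies x_{W_l} = 0 *)
Definition lam_domain (e : rel V) (W : nat -> {set V}) (l : nat) : {set {set V}} :=
  [set S | stableb e S
         & [forall j : 'I_l, (1 <= j)%N ==> (xsum (chi S) (W j) == 1)]
         && (xsum (chi S) (W l) == 0)].

End Defs.

(* On a stable set S that meets every clique W_j (j <= t) exactly once, f_t is
   bounded by backward induction on t: if S meets W_(t+1) then f_t(chi S) =
   f_(t+1)(chi S), otherwise f_t(chi S) = f_(t+1)(chi S) - lam_(t+1) <= d by the
   choice of lam_(t+1) as a maximum; at t = r, S is stable in G_r because a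
   common vertex of S and W_j forbids the new edges of G_(j-1) | W_j inside S.
   Since f_t is affine, it remains to see that a point of F_t is a convex
   combination of such sets: every stable set meets the clique W_j at most once,
   so x_(W_j) = 1 forces each set in the support to meet it exactly once. *)

From mathcomp Require Import all_boot all_order all_algebra.
From mathcomp Require Import lra.
Import Order.TTheory GRing.Theory Num.Theory.
Local Open Scope ring_scope.
Set Implicit Arguments.
Unset Strict Implicit.

Section StableSets.
Variables (V : finType) (R : realFieldType).
Implicit Types (e : rel V) (S W : {set V}).

Lemma xsum_chi S W : xsum (chi R S) W = #|S :&: W|%:R.
Proof.
rewrite /xsum /chi -natr_sum -sum1_card; congr _%:R.
rewrite [RHS](eq_bigl (fun v => (v \in W) && (v \in S))) => [|v]; last first.
  by rewrite !inE andbC.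
by rewrite big_mkcondr; apply: eq_bigr => v _; case: (v \in S).
Qed.

Lemma chi_inSTAB e S : stableb e S -> inSTAB e (chi R S).
Proof.
move=> stS; exists (fun T => (T == S)%:R); split=> [T|T|| v].
- by rewrite ler0n.
- by case: eqP => // ->; rewrite stS.
- by rewrite (bigD1 S) //= eqxx big1 ?addr0 // => T /negbTE ->.
- rewrite (bigD1 S) //= eqxx mul1r big1 ?addr0 // => T /negbTE ->.
  by rewrite mul0r.
Qed.

Lemma card_stable_clique_le1 e S W :
  stableb e S -> is_clique e W -> (#|S :&: W| <= 1)%N.
Proof.
move=> /forallP stS clW; rewrite leqNgt; apply/card_gt1P => -[u [v []]].
rewrite !inE => /andP[uS uW] /andP[vS vW] uv.
have /implyP/(_ uS)/forallP/(_ v)/implyP/(_ vS)/negP := stS u.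
by apply; apply: clW.
Qed.

Lemma stableb_clique_proj e S W w :
  w \in S :&: W -> stableb e S -> stableb (clique_proj e W) S.
Proof.
rewrite inE => /andP[wS wW] /forallP stS.
have nadj u v : u \in S -> v \in S -> e u v = false.
  move=> uS vS.
  by have /implyP/(_ uS)/forallP/(_ v)/implyP/(_ vS)/negbTE := stS u.
apply/forallP => u; apply/implyP => uS; apply/forallP => v; apply/implyP => vS.
rewrite /clique_proj nadj //=; apply/negP => /andP[_ /subsetP/(_ w wW)].
by rewrite !inE !nadj.
Qed.

Definition meets_once (W : nat -> {set V}) (t : nat) S :=
  forall j, (1 <= j <= t)%N -> #|S :&: W j| = 1%N.

Lemma meets_once_le (W : nat -> {set V}) t u S :
  (u <= t)%N -> meets_once W t S -> meets_once W u S.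
Proof.
by move=> ut mS j /andP[j1 ju]; apply: mS; rewrite j1 (leq_trans ju).
Qed.

Lemma meets_onceS (W : nat -> {set V}) t S :
  meets_once W t S -> #|S :&: W t.+1| = 1%N -> meets_once W t.+1 S.
Proof.
move=> mS mSt j /andP[j1]; rewrite leq_eqVlt ltnS => /orP[/eqP -> //|jt].
by apply: mS; rewrite j1.
Qed.

Lemma stableb_Gseq e (W : nat -> {set V}) t S :
  stableb e S -> meets_once W t S -> stableb (Gseq e W t) S.
Proof.
move=> stS; elim: t => [|t IH] //= mS.
have /eqP/cards1P[w Sw] := mS t.+1 (leqnn _).
apply: (@stableb_clique_proj _ _ _ w); first by rewrite Sw set11.
by apply: IH; apply: meets_once_le mS.
Qed.

Lemma fval_recl c lam (W : nat -> {set V}) r t (y : V -> R) :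
  (t < r)%N ->
  fval c lam W r t y = fval c lam W r t.+1 y + lam t.+1 * (xsum y (W t.+1) - 1).
Proof. by move=> tr; rewrite /fval big_ltn ?ltnS // addrA addrAC. Qed.

Lemma maxS_ge (A : {set {set V}}) (g : {set V} -> R) S :
  S \in A -> g S <= maxS A g.
Proof.
move=> AS; rewrite /maxS; case: pickP => [S0 _|A0]; last by rewrite A0 in AS.
by rewrite (bigD1 S) //= le_max lexx.
Qed.

End StableSets.

Section ConvexCombinations.
Variables (V : finType) (R : realFieldType).
Variables (x : V -> R) (w : {set V} -> R).
Hypothesis x_comb : forall v, x v = \sum_S w S * chi R S v.

Lemma xsum_comb W : xsum x W = \sum_S w S * xsum (chi R S) W.
Proof.
rewrite /xsum (eq_bigr _ (fun v _ => x_comb v)) exchange_big.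
by apply: eq_bigr => S _; rewrite mulr_sumr.
Qed.

Lemma dotp_comb c : dotp c x = \sum_S w S * dotp c (chi R S).
Proof.
rewrite /dotp; under eq_bigr do rewrite x_comb mulr_sumr.
rewrite exchange_big; apply: eq_bigr => S _; rewrite mulr_sumr.
by apply: eq_bigr => v _; rewrite mulrCA.
Qed.

Hypothesis w_sum1 : \sum_S w S = 1.

Lemma fval_comb c lam W r t :
  fval c lam W r t x = \sum_S w S * fval c lam W r t (chi R S).
Proof.
have term_comb l : lam l * (xsum x (W l) - 1) =
    \sum_S w S * (lam l * (xsum (chi R S) (W l) - 1)).
  rewrite xsum_comb -[X in _ - X]w_sum1 -sumrB mulr_sumr.
  by apply: eq_bigr => S _; rewrite mulrCA [w S * (_ - 1)]mulrBr mulr1.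
rewrite /fval dotp_comb (eq_bigr _ (fun l _ => term_comb l)) exchange_big.
rewrite -big_split; apply: eq_bigr => S _.
by rewrite mulrDr [w S * \sum_(_ <= _ < _) _]mulr_sumr.
Qed.

End ConvexCombinations.

Lemma convex_comb_eq1 (I : finType) (R : realFieldType) (w a : I -> R) :
  (forall i, 0 <= w i) -> \sum_i w i = 1 -> (forall i, w i != 0 -> a i <= 1) ->
  \sum_i w i * a i = 1 -> forall i, w i != 0 -> a i = 1.
Proof.
move=> w_ge0 w_sum1 a_le1 wa_sum1 i wi.
have gap_ge0 j : 0 <= w j * (1 - a j).
  have [-> | wj] := eqVneq (w j) 0; first by rewrite mul0r.
  by rewrite mulr_ge0 // subr_ge0 a_le1.
have gap_sum0 : \sum_j w j * (1 - a j) = 0.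
  under eq_bigr do rewrite mulrBr mulr1.
  by rewrite sumrB w_sum1 wa_sum1 subrr.
have /eqP := psumr_eq0P (fun j _ => gap_ge0 j) gap_sum0 (i := i) isT.
by rewrite mulf_eq0 (negbTE wi) subr_eq0 eq_sym => /eqP.
Qed.

Section CliqueProjections.
Variables (V : finType) (R : realFieldType) (e : rel V).
Variables (r : nat) (W : nat -> {set V}).
Hypothesis W_clique :
  forall t, (1 <= t <= r)%N -> is_clique (Gseq e W t.-1) (W t).

Lemma card_clique_le1 t S :
  (t < r)%N -> stableb e S -> meets_once W t S -> (#|S :&: W t.+1| <= 1)%N.
Proof.
move=> tr stS mS; apply: card_stable_clique_le1 (W_clique _).
  exact: stableb_Gseq.
by rewrite tr.
Qed.

Lemma support_meets_once (x : V -> R) (w : {set V} -> R) t :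
  (forall S, 0 <= w S) -> (forall S, ~~ stableb e S -> w S = 0) ->
  \sum_S w S = 1 -> (forall v, x v = \sum_S w S * chi R S v) -> (t <= r)%N ->
  (forall j, (1 <= j <= t)%N -> xsum x (W j) = 1) ->
  forall S, w S != 0 -> meets_once W t S.
Proof.
move=> w_ge0 w_stable w_sum1 x_comb; elim: t => [|t IH] tr xW S wS.
  by move=> j /andP[j1 j0]; move: (leq_trans j1 j0).
have mS : forall S, w S != 0 -> meets_once W t S.
  apply: IH => [|j /andP[j1 jt]]; first exact: ltnW.
  by apply: xW; rewrite j1 leqW.
apply: meets_onceS (mS S wS) _; apply/eqP; rewrite -(eqr_nat R) -xsum_chi.
apply/eqP; move: S wS; apply: convex_comb_eq1 => // [S wS|].
  rewrite xsum_chi lern1; apply: card_clique_le1 (mS S wS) => //.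
  by apply: contraNT wS => /w_stable ->.
by rewrite -(xsum_comb x_comb); apply: xW; rewrite /= ltnS leqnn.
Qed.

Variables (c : V -> R) (d : R) (lam : nat -> R).
Hypothesis c_valid : forall x, inSTAB (Gseq e W r) x -> dotp c x <= d.
Hypothesis lam_def : forall l, (1 <= l <= r)%N ->
  lam l = maxS (lam_domain R e W l) (fun S => fval c lam W r l (chi R S) - d).

Lemma fval_chi_le t S : (t <= r)%N -> stableb e S -> meets_once W t S ->
  fval c lam W r t (chi R S) <= d.
Proof.
move=> /subnKC; move: (r - t)%N => n; elim: n t => [|n IH] t tn stS mS.
  rewrite addn0 in tn; rewrite /fval big_geq ?addr0; last by rewrite tn.
  by apply/c_valid/chi_inSTAB; rewrite -tn; apply: stableb_Gseq.
have tr : (t < r)%N by rewrite -tn -addSnnS leq_addr.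
rewrite fval_recl // xsum_chi.
have := card_clique_le1 tr stS mS; rewrite leq_eqVlt ltnS leqn0.
case/orP => [/eqP S_meets | /eqP S_misses].
  rewrite S_meets subrr mulr0 addr0; apply: IH (meets_onceS mS S_meets) => //.
  by rewrite addSnnS.
have S_dom : S \in lam_domain R e W t.+1.
  rewrite inE stS xsum_chi S_misses eqxx andbT.
  apply/forallP => j; apply/implyP => j1.
  by rewrite xsum_chi mS // j1 -ltnS ltn_ord.
have := maxS_ge (fun S => fval c lam W r t.+1 (chi R S) - d) S_dom.
rewrite -lam_def ?tr // S_misses; lra.
Qed.

End CliqueProjections.

Theorem lemma6 (V : finType) (R : realFieldType) (e : rel V)
    (r : nat) (W : nat -> {set V}) (c : V -> R) (d : R) (lam : nat -> R) :
  simple_graph e ->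
  (* W_1, ..., W_r are distinct *)
  {in [pred i : nat | (1 <= i <= r)%N] &, injective W} ->
  (* W_t is a clique of G_{t-1} with |W_t| >= 2 *)
  (forall t, (1 <= t <= r)%N ->
     is_clique (Gseq e W t.-1) (W t) /\ (2 <= #|W t|)%N) ->
  (* c^T x <= d is valid for STAB(G_r) *)
  (forall x, inSTAB (Gseq e W r) x -> dotp c x <= d) ->
  (* lambda^S_l = max { f_l(x) - d | x in S_{l-1}, x_{W_l} = 0 }, max of empty = 0 *)
  (forall l, (1 <= l <= r)%N ->
     lam l = maxS (lam_domain R e W l) (fun S => fval c lam W r l (chi R S) - d)) ->
  forall t, (t <= r)%N ->
  forall x : V -> R, inF e W t x -> fval c lam W r t x <= d.
Proof.
move=> _ _ W_clique c_valid lam_def t tr x.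
move=> [[w [w_ge0 w_stable w_sum1 x_comb]] xW].
have {}W_clique t' : (1 <= t' <= r)%N -> is_clique (Gseq e W t'.-1) (W t').
  by case/W_clique.
have w_supp := support_meets_once W_clique w_ge0 w_stable w_sum1 x_comb tr xW.
rewrite (fval_comb x_comb w_sum1) -[d]mul1r -w_sum1 mulr_suml.
apply: ler_sum => S _.
have [-> | wS] := eqVneq (w S) 0; first by rewrite !mul0r.
have stS : stableb e S by apply: contraNT wS => /w_stable ->.
have fS_le := fval_chi_le W_clique c_valid lam_def tr stS (w_supp S wS).
by rewrite ler_wpM2l // fS_le.
Qed.
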